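(* Let $\xi\in C^2(\mathbb S^1;\mathbb R^d)$ and $\sigma\in C^1(\mathbb S^1;\mathbb R)$ satisfy $\partial_s(\sigma\partial_s\xi)+\xi=0$ and $|\partial_s\xi|=1$ on $\mathbb S^1$. Let $\tau:=\sigma^2$ and $\bar\tau:=\int_0^1\tau^{1/2}\,ds$. Then $\tau$ satisfies the first integral $$\tfrac12(\partial_s\tau)^2+V(\tau)=\lambda,\qquad V(\tau):=4\tau^{3/2}-6\bar\tau\,\tau,$$ where $\lambda=V(\tau_e)$ for any extreme value $\tau_e$ of $\tau$. Moreover $\lambda\in[-2\bar\tau^3,0)$.
   Context: $\mathbb S^1=\mathbb R/\mathbb Z$, $d\ge2$. *)

(* Functions on S^1 = R/Z are 1-periodic functions R -> R. *)
From Stdlib Require Import Reals Lra.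
From Coquelicot Require Import Coquelicot.
Open Scope R_scope.

Definition periodic1 (f : R -> R) : Prop := forall s, f (s + 1) = f s.

Definition isC1 (f : R -> R) : Prop :=
  (forall s, ex_derive f s) /\ (forall s, continuous (Derive f) s).
Definition isC2 (f : R -> R) : Prop :=
  (forall s, ex_derive f s) /\ (forall s, ex_derive (Derive f) s) /\
  (forall s, continuous (Derive (Derive f)) s).

(* Euclidean norm in R^d of the vector with components v 0, ..., v (d-1) *)
Definition eucl_norm (d : nat) (v : nat -> R) : R :=
  sqrt (sum_f_R0 (fun i => v i ^ 2) (pred d)).

Definition pow3half (t : R) : R := t * sqrt t.

Definition Vpot (taubar t : R) : R := 4 * pow3half t - 6 * taubar * t.

Definition local_extremum (f : R -> R) (s0 : R) : Prop :=
  exists eps, 0 < eps /\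
    ((forall t, Rabs (t - s0) < eps -> f t <= f s0) \/
     (forall t, Rabs (t - s0) < eps -> f s0 <= f t)).

From Stdlib Require Import Reals Lra Lia.
From Coquelicot Require Import Coquelicot.
Open Scope R_scope.

(* Differentiating |ξ'|² = 1 gives ξ'·ξ'' = 0, and taking the inner product of
   ξ = -(σ'ξ' + σξ'') with ξ', ξ'' and ξ yields
     σ' = -ξ·ξ',   ξ·ξ'' = -σ|ξ''|²,   |ξ|² = (ξ·ξ')² + σ²|ξ''|².
   Hence (|ξ|²)' = -2σ', so 2|ξ|² + 4σ is a constant k, and
   E = 2σ²(ξ·ξ')² + 4σ³ - kσ² = -2σ⁴|ξ''|² has zero derivative.  The periodic
   function ξ·ξ' has a critical point, where σ|ξ''|² = 1 and so E = -2σ³ < 0;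
   thus σ never vanishes and, being positive there, σ > 0.  Then
   E = ½τ'² + 4τ^{3/2} - kτ, and since (σ ξ·ξ' + ks/2)' = 3σ, periodicity gives
   τ̄ = ∫σ = k/6, i.e. E = ½τ'² + V(τ).  The lower bound on E is
   V(τ) + 2τ̄³ = 2(√τ - τ̄)²(2√τ + τ̄) ≥ 0. *)

(* Components 0, ..., n, so vectors of R^d use [n = pred d]. *)
Definition inner (n : nat) (u v : nat -> R -> R) (s : R) : R :=
  sum_f_R0 (fun i => u i s * v i s) n.

Lemma inner_comm n u v s : inner n u v s = inner n v u s.
Proof. apply sum_eq; intros; apply Rmult_comm. Qed.

Lemma inner_self_ge0 n u s : 0 <= inner n u u s.
Proof. apply cond_pos_sum; intros; apply Rle_0_sqr. Qed.

Lemma inner_linear_l n u v w z a b s :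
  (forall i, (i <= n)%nat -> u i s = a * v i s + b * w i s) ->
  inner n u z s = a * inner n v z s + b * inner n w z s.
Proof.
  intros Hu; unfold inner.
  rewrite !scal_sum, <- sum_plus; apply sum_eq; intros i Hi.
  rewrite Hu by exact Hi; ring.
Qed.

Lemma is_derive_inner n u v du dv s :
  (forall i, (i <= n)%nat -> is_derive (u i) s (du i s)) ->
  (forall i, (i <= n)%nat -> is_derive (v i) s (dv i s)) ->
  is_derive (inner n u v) s (inner n du v s + inner n u dv s).
Proof.
  intros Hu Hv; unfold inner; rewrite <- sum_plus, <- sum_n_Reals.
  apply (is_derive_ext (fun t => sum_n (fun i => u i t * v i t) n)).
  - intros t; apply sum_n_Reals.
  - apply (is_derive_sum_n (fun i t => u i t * v i t) n s
             (fun i => du i s * v i s + u i s * dv i s)); intros i Hi.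
    exact (is_derive_mult _ _ _ _ _ (Hu i Hi) (Hv i Hi) Rmult_comm).
Qed.

Lemma periodic1_inner n u v :
  (forall i, (i <= n)%nat -> periodic1 (u i)) ->
  (forall i, (i <= n)%nat -> periodic1 (v i)) -> periodic1 (inner n u v).
Proof.
  intros Hu Hv s; apply sum_eq; intros i Hi.
  now rewrite (Hu i Hi), (Hv i Hi).
Qed.

(* [auto_derive] leaves the derivative of an abstract [f] as [Derive (fun t => f t)]. *)
Lemma Derive_eta (f : R -> R) s l : is_derive f s l -> Derive (fun t => f t) s = l.
Proof. apply is_derive_unique. Qed.

Lemma is_derive_continuity_pt (f : R -> R) s l :
  is_derive f s l -> continuity_pt f s.
Proof. intros Hf; apply derivable_continuous_pt; exists l; apply is_derive_Reals, Hf. Qed.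

Lemma is_derive_0_const (f : R -> R) :
  (forall s, is_derive f s 0) -> forall s, f s = f 0.
Proof.
  intros Hf s.
  destruct (MVT_gen f 0 s (fun _ => 0)) as [c [_ Hc]].
  - intros t _; apply Hf.
  - intros t _; apply (is_derive_continuity_pt f t 0), Hf.
  - lra.
Qed.

Lemma periodic1_critical_point (f df : R -> R) :
  periodic1 f -> (forall s, is_derive f s (df s)) -> exists c, df c = 0.
Proof.
  intros f_per Hf.
  destruct (MVT_gen f 0 1 df) as [c [_ Hc]].
  - intros t _; apply Hf.
  - intros t _; apply (is_derive_continuity_pt f t (df t)), Hf.
  - exists c. rewrite <- (Rplus_0_l 1), f_per in Hc. lra.
Qed.

Lemma periodic1_Derive (f : R -> R) :
  periodic1 f -> (forall s, ex_derive f s) -> periodic1 (Derive f).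
Proof.
  intros f_per Hf s; symmetry; apply is_derive_unique.
  apply (is_derive_ext (fun t => f (t + 1))); [intros t; apply f_per|].
  auto_derive; [apply Hf | apply Rmult_1_l].
Qed.

Lemma continuity_nonvanishing_pos (f : R -> R) s0 :
  continuity f -> (forall s, f s <> 0) -> 0 < f s0 -> forall s, 0 < f s.
Proof.
  intros Hf Hnz Hs0 s.
  destruct (Rlt_or_le 0 (f s)) as [Hs|Hs]; [exact Hs|].
  destruct (IVT_gen f s s0 0 Hf) as [z [_ Hz]].
  - split; [apply (Rle_trans _ (f s)), Hs; apply Rmin_l|].
    apply (Rle_trans _ (f s0)); [lra | apply Rmax_r].
  - now destruct (Hnz z).
Qed.

Lemma local_extremum_derive (f : R -> R) s0 l :
  local_extremum f s0 -> is_derive f s0 l -> l = 0.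
Proof.
  intros [eps [Heps Hext]] Hf.
  apply is_derive_Reals in Hf.
  set (pr := exist _ l Hf : derivable_pt f s0).
  rewrite <- (derive_pt_eq_0 f s0 l pr Hf).
  destruct Hext as [Hmax|Hmin].
  - apply (deriv_maximum f (s0 - eps) (s0 + eps)); try lra.
    intros t H1 H2; apply Hmax, Rabs_def1; lra.
  - apply (deriv_minimum f (s0 - eps) (s0 + eps)); try lra.
    intros t H1 H2; apply Hmin, Rabs_def1; lra.
Qed.

Lemma Vpot_ge taubar t :
  0 <= taubar -> 0 <= t -> - 2 * taubar ^ 3 <= Vpot taubar t.
Proof.
  intros Htb Ht.
  assert (Hfactor : Vpot taubar t + 2 * taubar ^ 3
                    = 2 * ((sqrt t - taubar) ^ 2 * (2 * sqrt t + taubar))).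
  { unfold Vpot, pow3half; rewrite <- (pow2_sqrt t Ht) at 1 3; ring. }
  assert (0 <= (sqrt t - taubar) ^ 2 * (2 * sqrt t + taubar)).
  { apply Rmult_le_pos; [apply pow2_ge_0 | generalize (sqrt_pos t); lra]. }
  lra.
Qed.

Section TensionedCurve.

Variable n : nat.
Variables x x' x'' : nat -> R -> R.
Variables sg sg' : R -> R.

Hypothesis x_derive : forall i s, (i <= n)%nat -> is_derive (x i) s (x' i s).
Hypothesis x'_derive : forall i s, (i <= n)%nat -> is_derive (x' i) s (x'' i s).
Hypothesis sg_derive : forall s, is_derive sg s (sg' s).
Hypothesis x_per : forall i, (i <= n)%nat -> periodic1 (x i).
Hypothesis sg_per : periodic1 sg.
Hypothesis curve_eq :
  forall i s, (i <= n)%nat -> x i s = - sg' s * x' i s + - sg s * x'' i s.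
Hypothesis unit_speed : forall s, inner n x' x' s = 1.

Lemma x'_per i : (i <= n)%nat -> periodic1 (x' i).
Proof.
  intros Hi s.
  rewrite <- (is_derive_unique _ _ _ (x_derive i s Hi)),
          <- (is_derive_unique _ _ _ (x_derive i (s + 1) Hi)).
  apply periodic1_Derive; [apply x_per, Hi|].
  intros t; eexists; apply x_derive, Hi.
Qed.

Let G := inner n x x'.
Let F := inner n x x.
Let P := inner n x'' x''.

Lemma inner_speed_accel s : inner n x' x'' s = 0.
Proof.
  assert (Hd : is_derive (inner n x' x') s (inner n x'' x' s + inner n x' x'' s))
    by (apply is_derive_inner; intros i Hi; apply x'_derive, Hi).
  assert (H0 : is_derive (inner n x' x') s 0).
  { apply (is_derive_ext (fun _ => 1)); [intros t; symmetry; apply unit_speed|].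
    apply (is_derive_const (1 : R) s). }
  rewrite (inner_comm n x'' x') in Hd.
  apply is_derive_unique in Hd; apply is_derive_unique in H0; lra.
Qed.

Lemma sg'_eq s : sg' s = - G s.
Proof.
  unfold G; rewrite (inner_linear_l n x x' x'' x' (- sg' s) (- sg s) s)
    by (intros i Hi; apply curve_eq, Hi).
  rewrite unit_speed, (inner_comm n x'' x'), inner_speed_accel; ring.
Qed.

Lemma inner_pos_accel s : inner n x x'' s = - sg s * P s.
Proof.
  rewrite (inner_linear_l n x x' x'' x'' (- sg' s) (- sg s) s)
    by (intros i Hi; apply curve_eq, Hi).
  rewrite inner_speed_accel; unfold P; ring.
Qed.

Lemma F_eq s : F s = G s ^ 2 + sg s ^ 2 * P s.
Proof.
  unfold F; rewrite (inner_linear_l n x x' x'' x (- sg' s) (- sg s) s)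
    by (intros i Hi; apply curve_eq, Hi).
  rewrite (inner_comm n x' x), (inner_comm n x'' x), inner_pos_accel, sg'_eq.
  unfold G; ring.
Qed.

Lemma G_derive s : is_derive G s (1 - sg s * P s).
Proof.
  assert (Hd : is_derive G s (inner n x' x' s + inner n x x'' s))
    by (apply is_derive_inner; intros i Hi; [apply x_derive | apply x'_derive]; exact Hi).
  rewrite unit_speed, inner_pos_accel in Hd.
  replace (1 - sg s * P s) with (1 + - sg s * P s) by ring; exact Hd.
Qed.

Lemma F_derive s : is_derive F s (2 * G s).
Proof.
  assert (Hd : is_derive F s (inner n x' x s + inner n x x' s))
    by (apply is_derive_inner; intros i Hi; apply x_derive, Hi).
  rewrite (inner_comm n x' x) in Hd.
  replace (2 * G s) with (inner n x x' s + inner n x x' s) by (unfold G; ring); exact Hd.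
Qed.

Let k := 2 * F 0 + 4 * sg 0.

Lemma F_sg_const s : 2 * F s + 4 * sg s = k.
Proof.
  apply (is_derive_0_const (fun t => 2 * F t + 4 * sg t)); intros t.
  auto_derive; [repeat split; eexists; eauto using F_derive, sg_derive|].
  rewrite (Derive_eta F _ _ (F_derive t)), (Derive_eta sg _ _ (sg_derive t)), sg'_eq; ring.
Qed.

Let energy s := 2 * sg s ^ 2 * G s ^ 2 + 4 * sg s ^ 3 - k * sg s ^ 2.

Lemma energy_const s : energy s = energy 0.
Proof.
  apply (is_derive_0_const energy); intros t; unfold energy.
  auto_derive; [repeat split; eexists; eauto using G_derive, sg_derive|].
  rewrite (Derive_eta G _ _ (G_derive t)), (Derive_eta sg _ _ (sg_derive t)), sg'_eq.
  rewrite <- (F_sg_const t), F_eq; ring.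
Qed.

Let lam := energy 0.

Lemma lam_eq s : lam = - 2 * sg s ^ 4 * P s.
Proof.
  unfold lam; rewrite <- (energy_const s); unfold energy.
  rewrite <- (F_sg_const s), F_eq; ring.
Qed.

Lemma G_critical_point : exists c, 0 < sg c /\ sg c * P c = 1.
Proof.
  destruct (periodic1_critical_point G _ (periodic1_inner n x x' x_per x'_per) G_derive)
    as [c Hc].
  exists c; assert (HP := inner_self_ge0 n x'' c); fold P in HP; split; nra.
Qed.

Lemma lam_lt0 : lam < 0.
Proof.
  destruct G_critical_point as [c [Hsg HsgP]].
  rewrite (lam_eq c).
  replace (- 2 * sg c ^ 4 * P c) with (- 2 * sg c ^ 3 * (sg c * P c)) by ring.
  rewrite HsgP; generalize (pow_lt (sg c) 3 Hsg); lra.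
Qed.

Lemma sg_pos s : 0 < sg s.
Proof.
  destruct G_critical_point as [c [Hc _]].
  apply (continuity_nonvanishing_pos sg c); [|intros t Ht|exact Hc].
  - intros t; apply (is_derive_continuity_pt sg t (sg' t)), sg_derive.
  - generalize lam_lt0; rewrite (lam_eq t), Ht; lra.
Qed.

Lemma sg_integral : is_RInt sg 0 1 (k / 6).
Proof.
  set (f := fun t => / 3 * (sg t * G t + k / 2 * t)).
  assert (Hf : forall t, is_derive f t (sg t)).
  { intros t; unfold f.
    auto_derive; [repeat split; eexists; eauto using G_derive, sg_derive|].
    rewrite (Derive_eta G _ _ (G_derive t)), (Derive_eta sg _ _ (sg_derive t)), sg'_eq.
    rewrite <- (F_sg_const t), F_eq; field. }
  replace (k / 6) with (minus (f 1) (f 0)).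
  - apply (is_RInt_derive f sg 0 1); intros t _; [apply Hf|].
    apply (ex_derive_continuous sg t); exists (sg' t); apply sg_derive.
  - assert (Hsg1 := sg_per 0); assert (HG1 := periodic1_inner n x x' x_per x'_per 0).
    rewrite Rplus_0_l in Hsg1, HG1.
    unfold minus, plus, opp, f; simpl; fold G in HG1; rewrite Hsg1, HG1; field.
Qed.

Lemma taubar_eq : RInt (fun s => sqrt (sg s ^ 2)) 0 1 = k / 6.
Proof.
  rewrite <- (is_RInt_unique _ _ _ _ sg_integral).
  apply RInt_ext; intros t _; apply sqrt_pow2, Rlt_le, sg_pos.
Qed.

Lemma first_integral s :
  / 2 * (2 * sg s * sg' s) ^ 2 + Vpot (k / 6) (sg s ^ 2) = lam.
Proof.
  unfold Vpot, pow3half; rewrite sqrt_pow2 by apply Rlt_le, sg_pos.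
  unfold lam; rewrite <- (energy_const s); unfold energy; rewrite sg'_eq; field.
Qed.

Theorem tau_first_integral :
  let tau := fun s => sg s ^ 2 in
  let taubar := RInt (fun s => sqrt (tau s)) 0 1 in
  exists lambda : R,
    (forall s, / 2 * (Derive tau s) ^ 2 + Vpot taubar (tau s) = lambda) /\
    (forall s0, local_extremum tau s0 -> lambda = Vpot taubar (tau s0)) /\
    - 2 * taubar ^ 3 <= lambda /\ lambda < 0.
Proof.
  intros tau taubar.
  assert (tau_derive : forall s, is_derive tau s (2 * sg s * sg' s)).
  { intros s; unfold tau; auto_derive; [eexists; apply sg_derive|].
    rewrite (Derive_eta sg _ _ (sg_derive s)); ring. }
  assert (Htaubar : taubar = k / 6) by apply taubar_eq.
  exists lam; split; [|split; [|split]].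
  - intros s; rewrite (is_derive_unique _ _ _ (tau_derive s)), Htaubar.
    apply first_integral.
  - intros s0 Hext; rewrite <- (first_integral s0), Htaubar.
    rewrite (local_extremum_derive tau s0 _ Hext (tau_derive s0)); unfold tau; ring.
  - rewrite <- (first_integral 0), Htaubar.
    assert (Hk : 0 <= k / 6).
    { unfold k; generalize (inner_self_ge0 n x 0) (sg_pos 0); fold F; lra. }
    generalize (Vpot_ge (k / 6) (sg 0 ^ 2) Hk (pow2_ge_0 _)) (pow2_ge_0 (2 * sg 0 * sg' 0)).
    lra.
  - exact lam_lt0.
Qed.

End TensionedCurve.

Theorem proposition3p9 (d : nat) (xi : nat -> R -> R) (sg : R -> R)
  (hd : (2 <= d)%nat)
  (hxi_per : forall i, (i < d)%nat -> periodic1 (xi i))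
  (hxi_C2 : forall i, (i < d)%nat -> isC2 (xi i))
  (hsg_per : periodic1 sg)
  (hsg_C1 : isC1 sg)
  (heq : forall i s, (i < d)%nat ->
     Derive (fun t => sg t * Derive (xi i) t) s + xi i s = 0)
  (hunit : forall s, eucl_norm d (fun i => Derive (xi i) s) = 1) :
  let tau := fun s => sg s ^ 2 in
  let taubar := RInt (fun s => sqrt (tau s)) 0 1 in
  exists lambda : R,
    (forall s, / 2 * (Derive tau s) ^ 2 + Vpot taubar (tau s) = lambda) /\
    (forall s0, local_extremum tau s0 -> lambda = Vpot taubar (tau s0)) /\
    - 2 * taubar ^ 3 <= lambda /\ lambda < 0.
Proof.
  assert (Hi : forall i, (i <= pred d)%nat -> (i < d)%nat) by lia.
  apply (tau_first_integral (pred d) xi (fun i => Derive (xi i))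
           (fun i => Derive (Derive (xi i))) sg (Derive sg)).
  - intros i s Hid; apply Derive_correct, (hxi_C2 i (Hi i Hid)).
  - intros i s Hid; apply Derive_correct, (hxi_C2 i (Hi i Hid)).
  - intros s; apply Derive_correct, hsg_C1.
  - intros i Hid; apply hxi_per, Hi, Hid.
  - exact hsg_per.
  - intros i s Hid; generalize (heq i s (Hi i Hid)).
    rewrite Derive_mult; [lra | apply hsg_C1 | apply (hxi_C2 i (Hi i Hid))].
  - intros s; rewrite <- (pow2_sqrt _ (inner_self_ge0 _ _ s)).
    replace (sqrt _) with (eucl_norm d (fun i => Derive (xi i) s)); [rewrite hunit; ring|].
    unfold inner, eucl_norm; f_equal; apply sum_eq; intros; ring.
Qed.
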